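(* For every positive integer $n$, every triangle-free graph on $n$ vertices contains at most $\left(\frac{n}{5}\right)^5$ cycles of length 5.
   Context: Graphs are finite and simple. A cycle of length 5 is a subgraph isomorphic to $C_5$, counted as an unlabelled subgraph. *)

From HB Require Import structures.
From mathcomp Require Import all_boot all_order all_algebra.
Set Implicit Arguments. Unset Strict Implicit. Unset Printing Implicit Defensive.

Definition simple_graph (T : finType) (e : rel T) : Prop :=
  symmetric e /\ irreflexive e.

Definition triangle_free (T : finType) (e : rel T) : Prop :=
  forall x y z : T, ~ [&& e x y, e y z & e z x].

Definition cycle_edges (T : finType) (f : 'I_5 -> T) : {set {set T}} :=
  [set [set f i; f (ordS i)] | i : 'I_5].

(* A subgraph isomorphic to C_5 (no isolated
   vertices) is determined by its edge set. *)
Definition is_C5 (T : finType) (e : rel T) (E : {set {set T}}) : bool :=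
  [exists f : {ffun 'I_5 -> T},
     [&& injectiveb f, [forall i : 'I_5, e (f i) (f (ordS i))]
       & E == cycle_edges f]].

Definition num_C5 (T : finType) (e : rel T) : nat :=
  #|[set E : {set {set T}} | is_C5 e E]|.

(* Instead of 5-cycles count closed walks of length 5, i.e. 5-tuples x of
   vertices with x_i x_{i+1 mod 5} edges: every 5-cycle is traced by its ten
   dihedral relabellings, so 10 C5(G) <= hom(C5, G).  The bound
   625 hom(C5, G) <= 2 n^5 is a flag-algebra certificate.  For a 5-tuple x let
   S(x) be a positive semidefinite form, depending on the type of the labelled
   triple (x_0, x_1, x_2), evaluated at the neighbourhoods of x_3 and x_4 in
   that triple.  With D = cert_scale, the quantity 2D - 625D [x closed walk] - S(x),
   summed over the 120 relabellings of x, is nonnegative whenever x induces a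
   triangle-free graph; this is checked by computation on all 2^10 labelled
   graphs with five vertices.  Summed over all n^5 tuples, S contributes a sum
   of squares, hence a nonnegative amount, and the bound follows. *)

From mathcomp Require Import all_boot all_order all_algebra zify.
From mathcomp Require Import ssrZ.
From Stdlib Require BinIntDef.
Import GRing.Theory Num.Theory.

Set Implicit Arguments. Unset Strict Implicit. Unset Printing Implicit Defensive.

Local Open Scope ring_scope.

Notation Z := BinNums.Z.

Section CertificateData.
Import BinIntDef.
Local Open Scope Z_scope.

Definition cert_scale : Z := 1070608713506929622096250050466017280.

Definition cert_sos : seq (seq (Z * seq Z)) :=
[::
  [::
    (328005120559721085201057000755520,
      [:: -58; 104; 104; -243; 272; -75; -75; 87]);
    (1280936424992402051032505860800,
      [:: 526; -840; -4104; -263; 0; 3841; 577; -789]);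
    (946350495965414281251720038400,
      [:: 526; -4681; -263; -263; 0; 0; 4418; -789]);
    (105392841327008180506268466375851520,
      [:: -2; 1; 1; 1; 0; 0; 0; 3])];
  [::
    (41690370463665483726489487946496,
      [:: -762; 1070; 392; 0; 300; -385; -315; 0]);
    (166439255456098927382545344,
      [:: -277043; 0; 500968; 0; 101700; -93065; -130860; 0]);
    (381497721463238033450560,
      [:: -5103449; 0; 0; 0; 14004540; 2573787; 2529662; 0]);
    (112131811134114266560,
      [:: -8104903; 0; 0; 0; 0; 1278304626; -1270199723; 0]);
    (3036246476329565277695669933198624320,
      [:: -1; 0; 0; 0; 0; 0; 1; 0])];
  [::
    (261379080446027739769592297477055,
      [:: -530; -261; 256; 0; -260; 9; 0; 0]);
    (156720878070528684356393031225,
      [:: 2838; -31937; 0; 0; 33356; -1419; 0; 0]);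
    (15053261503177413262510914391006914720,
      [:: -2; -1; 0; 0; 0; 1; 0; 0])]].

End CertificateData.

Definition pattern := rel 'I_5.

Definition ords5 : seq 'I_5 := [seq inZp k | k <- iota 0 5].

Lemma mem_ords5 (i : 'I_5) : i \in ords5.
Proof. by apply/mapP; exists (val i); rewrite ?valZpK // mem_iota /=. Qed.

Definition quad_form (R : pzRingType) (q : seq (R * seq R)) (u v : nat) : R :=
  foldr (fun t acc => t.1 * t.2`_u * t.2`_v + acc) 0 q.

Lemma quad_formE (R : pzRingType) (q : seq (R * seq R)) u v :
  quad_form q u v = \sum_(t <- q) t.1 * t.2`_u * t.2`_v.
Proof. by elim: q => [|t q IHq]; rewrite ?big_nil ?big_cons //= IHq. Qed.

Lemma sum_quad_form_ge0 (R : realDomainType) (W : finType) (q : seq (R * seq R))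
    (c : W -> nat) :
  all (fun t => 0 <= t.1) q -> 0 <= \sum_w \sum_w' quad_form q (c w) (c w').
Proof.
move=> /allP q_ge0.
have -> : \sum_w \sum_w' quad_form q (c w) (c w') =
          \sum_(t <- q) t.1 * (\sum_w t.2`_(c w)) ^+ 2.
  under eq_bigr do under eq_bigr do rewrite quad_formE.
  under eq_bigr do rewrite exchange_big /=.
  rewrite exchange_big /=; apply: eq_bigr => t _.
  rewrite expr2 mulrA [t.1 * _]big_distrr big_distrl /=; apply: eq_bigr => w _.
  by rewrite big_distrr.
by rewrite big_seq sumr_ge0 // => t /q_ge0 t_ge0; rewrite mulr_ge0 ?sqr_ge0.
Qed.

Lemma cert_sos_weights_ge0 s : all (fun t => 0 <= t.1) (nth [::] cert_sos s).
Proof.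
have : all (all (fun t : Z * seq Z => 0 <= t.1)) cert_sos by vm_compute.
case: (ltnP s (size cert_sos)) => [s_lt /allP -> // | s_ge _]; last by rewrite nth_default.
exact: mem_nth.
Qed.

Definition closed_walk (a : pattern) : bool := all (fun i => a i (ordS i)) ords5.

Lemma closed_walkP (a : pattern) : reflect (forall i, a i (ordS i)) (closed_walk a).
Proof.
by apply: (iffP allP) => [walk i | walk i _]; [apply: walk; apply: mem_ords5 | apply: walk].
Qed.

Definition type_index (a : pattern) : nat :=
  match a (inZp 0) (inZp 1), a (inZp 1) (inZp 2), a (inZp 0) (inZp 2) with
  | false, false, false => 0
  | true, false, false => 1
  | true, true, false => 2
  | _, _, _ => 3
  end.

Definition nbhd_code (a : pattern) (w : 'I_5) : nat :=
  a w (inZp 0) + a w (inZp 1) * 2 + a w (inZp 2) * 4.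

(* Triples of any other shape get index 3, past the end of [cert_sos],
   hence the zero form. *)
Definition sos_term (a : pattern) : Z :=
  quad_form (nth [::] cert_sos (type_index a))
    (nbhd_code a (inZp 3)) (nbhd_code a (inZp 4)).

Definition slack (a : pattern) : Z :=
  cert_scale *+ 2 - cert_scale *+ (625 * closed_walk a) - sos_term a.

Lemma slack_ext (a b : pattern) : a =2 b -> slack a = slack b.
Proof.
move=> ab; have walk_ab : closed_walk a = closed_walk b by apply: eq_all => i; apply: ab.
by rewrite /slack walk_ab /sos_term /type_index /nbhd_code !ab.
Qed.

Definition nth_ord5 (l : seq nat) (i : 'I_5) : 'I_5 := inZp (nth 0 l i).

Definition relabel (a : pattern) (l : seq nat) : pattern :=
  fun i j => a (nth_ord5 l i) (nth_ord5 l j).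

Definition perms5 : seq (seq nat) := permutations (iota 0 5).

Lemma nth_ord5_perms5_inj l : l \in perms5 -> injective (nth_ord5 l).
Proof.
have : all (fun l => all (fun i => all (fun j =>
         (nth_ord5 l i == nth_ord5 l j) ==> (i == j)) ords5) ords5) perms5 by vm_compute.
move=> /allP perms_inj /perms_inj /allP l_inj i j ij.
by have /allP/(_ j (mem_ords5 j)) := l_inj i (mem_ords5 i); rewrite ij eqxx => /eqP.
Qed.

Definition sym_slack (a : pattern) : Z :=
  foldr (fun l acc => slack (relabel a l) + acc) 0 perms5.

Lemma sym_slackE a : sym_slack a = \sum_(l <- perms5) slack (relabel a l).
Proof. by rewrite /sym_slack; elim: perms5 => [|l s IHs]; rewrite ?big_nil ?big_cons //= IHs. Qed.

Lemma sym_slack_ext (a b : pattern) : a =2 b -> sym_slack a = sym_slack b.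
Proof.
move=> ab; rewrite !sym_slackE; apply: eq_bigr => l _.
by apply: slack_ext => i j; apply: ab.
Qed.

Definition pairs5 : seq (nat * nat) :=
  [seq (i, j) | i <- iota 0 5, j <- iota i.+1 (4 - i)].

Lemma mem_pairs5 i j : ((i, j) \in pairs5) = (i < j < 5)%N.
Proof.
apply/allpairsPdep/andP => [[i' [j' []]] | [ij j5]].
  by rewrite !mem_iota => /andP [_ i'5] /andP [ij' j'5] [-> ->]; lia.
by exists i, j; rewrite !mem_iota; split => //; lia.
Qed.

(* A diagonal pair (i, i) is not in [pairs5]; its index 10 reads past the end
   of a 10-bit sequence and yields [false]. *)
Definition pattern_of_bits (b : seq bool) : pattern :=
  fun i j => nth false b (index (minn i j, maxn i j) pairs5).

Definition bits_of_pattern (a : pattern) : seq bool :=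
  [seq a (inZp p.1) (inZp p.2) | p <- pairs5].

Lemma bits_of_patternK (a : pattern) :
  simple_graph a -> pattern_of_bits (bits_of_pattern a) =2 a.
Proof.
move=> [asym airr] i j; rewrite /pattern_of_bits.
have [<-|ij] := eqVneq i j.
  by rewrite airr nth_default // memNindex ?size_map // mem_pairs5 minnn maxnn ltnn.
have ij_mem : (minn i j, maxn i j) \in pairs5.
  by rewrite mem_pairs5 gtn_max !ltn_ord andbT; move: ij; rewrite -val_eqE /=; lia.
rewrite (nth_map (0, 0)%N) ?index_mem // nth_index //=.
by case: leqP => _; rewrite !valZpK // asym.
Qed.

Fixpoint bitseqs (n : nat) : seq (seq bool) :=
  if n is m.+1 then [seq b :: s | b <- [:: false; true], s <- bitseqs m] else [:: [::]].

Lemma mem_bitseqs (s : seq bool) : s \in bitseqs (size s).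
Proof. by elim: s => // b s IHs; apply/allpairsP; exists (b, s); case: b. Qed.

Definition triangle_freeb (a : pattern) : bool :=
  all (fun i => all (fun j => all (fun k =>
    ~~ [&& a i j, a j k & a k i]) ords5) ords5) ords5.

Lemma certificate :
  all (fun b => triangle_freeb (pattern_of_bits b) ==> (0 <= sym_slack (pattern_of_bits b)))
    (bitseqs 10).
Proof. by vm_compute. Qed.

Lemma sym_slack_ge0 (a : pattern) : simple_graph a -> triangle_free a -> 0 <= sym_slack a.
Proof.
move=> a_simple a_tf; have aK := bits_of_patternK a_simple.
have := allP certificate _ (mem_bitseqs (bits_of_pattern a)).
rewrite (sym_slack_ext aK) => /implyP; apply.
apply/allP => i _; apply/allP => j _; apply/allP => k _.
by rewrite !aK; apply/negP; apply: a_tf.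
Qed.

Definition dihedral5 : seq (seq nat) :=
  [seq [seq ((k + i) %% 5)%N | i <- iota 0 5] | k <- iota 0 5] ++
  [seq [seq ((k + 5 - i) %% 5)%N | i <- iota 0 5] | k <- iota 0 5].

Lemma uniq_dihedral5 : uniq dihedral5.
Proof. by vm_compute. Qed.

Lemma dihedral5_nth_ord5K l : l \in dihedral5 -> [seq val (nth_ord5 l i) | i <- ords5] = l.
Proof.
have : all (fun l => [seq val (nth_ord5 l i) | i <- ords5] == l) dihedral5 by vm_compute.
by move=> /allP dihK /dihK /eqP.
Qed.

Definition maps_edge (l : seq nat) (i j : 'I_5) : bool :=
  ((nth_ord5 l i == j) && (nth_ord5 l (ordS i) == ordS j)) ||
  ((nth_ord5 l i == ordS j) && (nth_ord5 l (ordS i) == j)).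

Lemma dihedral5_edges l : l \in dihedral5 ->
  (forall i, exists j, maps_edge l i j) /\ (forall j, exists i, maps_edge l i j).
Proof.
have : all (fun l => all (fun i => has (maps_edge l i) ords5) ords5 &&
                     all (fun j => has (maps_edge l ^~ j) ords5) ords5) dihedral5.
  by vm_compute.
move=> /allP dih_edges /dih_edges /andP [/allP fwd /allP bwd].
split=> [i | j].
  by have /hasP [j _ ij] := fwd i (mem_ords5 i); exists j.
by have /hasP [i _ ij] := bwd j (mem_ords5 j); exists i.
Qed.

Section Graph.
Variables (T : finType) (e : rel T).

Definition induced (x : {ffun 'I_5 -> T}) : pattern := fun i j => e (x i) (x j).

Definition closed_walks := [set x : {ffun 'I_5 -> T} | closed_walk (induced x)].

Lemma induced_simple x : simple_graph e -> simple_graph (induced x).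
Proof. by move=> [esym eirr]; split=> [i j | i]; [apply: esym | apply: eirr]. Qed.

Lemma induced_triangle_free x : triangle_free e -> triangle_free (induced x).
Proof. by move=> etf i j k; apply: etf. Qed.

Lemma sum_relabel (F : pattern -> Z) l : l \in perms5 ->
  (forall a b, a =2 b -> F a = F b) ->
  \sum_x F (relabel (induced x) l) = \sum_x F (induced x).
Proof.
move=> /nth_ord5_perms5_inj /injF_bij [r nth_ord5K nth_ord5V] F_ext.
have precomp_inj : injective (fun x : {ffun 'I_5 -> T} => [ffun i => x (nth_ord5 l i)]).
  by move=> x y /ffunP xy; apply/ffunP => j; have := xy (r j); rewrite !ffunE nth_ord5V.
rewrite [RHS](reindex_inj precomp_inj); apply: eq_bigr => x _.
by apply: F_ext => i j; rewrite /induced /relabel !ffunE.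
Qed.

Lemma sum_slack_ge0 : simple_graph e -> triangle_free e ->
  0 <= \sum_x slack (induced x).
Proof.
move=> e_simple e_tf.
have : 0 <= \sum_x sym_slack (induced x).
  by apply: sumr_ge0 => x _; apply: sym_slack_ge0;
    [apply: induced_simple | apply: induced_triangle_free].
under eq_bigr do rewrite sym_slackE.
rewrite exchange_big /= big_seq.
under eq_bigr => l l_perm do rewrite (sum_relabel l_perm slack_ext).
by rewrite -big_seq big_const_seq iter_addr_0 pmulrn_lge0.
Qed.

Definition ffun_of5 (y : T * T * T) (u v : T) : {ffun 'I_5 -> T} :=
  [ffun i : 'I_5 => nth y.1.1 [:: y.1.1; y.1.2; y.2; u; v] i].

Lemma sum_ffun5 (F : {ffun 'I_5 -> T} -> Z) :
  \sum_x F x = \sum_(y : T * T * T) \sum_u \sum_v F (ffun_of5 y u v).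
Proof.
pose split5 (x : {ffun 'I_5 -> T}) := ((x (inZp 0), x (inZp 1), x (inZp 2)), x (inZp 3), x (inZp 4)).
have split5K : cancel split5 (fun z => ffun_of5 z.1.1 z.1.2 z.2).
  move=> x; apply/ffunP => i; rewrite ffunE -[i in RHS]valZpK.
  by case: i => [[|[|[|[|[|k]]]]] lt_k5].
have ffun_of5K : cancel (fun z => ffun_of5 z.1.1 z.1.2 z.2) split5.
  by case=> [[[[y0 y1] y2] u] v]; rewrite /split5 !ffunE.
rewrite (reindex _ (onW_bij _ (Bijective ffun_of5K split5K))) /=.
by rewrite [RHS]pair_big [RHS]pair_big; apply: eq_bigr => -[[y u] v].
Qed.

Lemma sos_term_ffun_of5 y u v :
  sos_term (induced (ffun_of5 y u v)) =
  quad_form (nth [::] cert_sos (type_index (induced (ffun_of5 y y.2 y.2))))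
    (nbhd_code (induced (ffun_of5 y u u)) (inZp 3))
    (nbhd_code (induced (ffun_of5 y v v)) (inZp 3)).
Proof. by rewrite /sos_term /type_index /nbhd_code /induced !ffunE. Qed.

Lemma sum_sos_ge0 : 0 <= \sum_x sos_term (induced x).
Proof.
rewrite sum_ffun5; apply: sumr_ge0 => y _.
under eq_bigr do under eq_bigr do rewrite sos_term_ffun_of5.
exact: sum_quad_form_ge0 (cert_sos_weights_ge0 _).
Qed.

Lemma card_closed_walks_le : simple_graph e -> triangle_free e ->
  (625 * #|closed_walks| <= 2 * #|T| ^ 5)%N.
Proof.
move=> e_simple e_tf.
have : 0 <= \sum_x (slack (induced x) + sos_term (induced x)).
  by rewrite big_split addr_ge0 ?sum_slack_ge0 ?sum_sos_ge0.
under eq_bigr do rewrite subrK.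
rewrite sumrB sumr_const sumrMnr card_ffun card_ord subr_ge0 -mulrnA.
have -> : (\sum_x 625 * closed_walk (induced x) = 625 * #|closed_walks|)%N.
  rewrite -big_distrr /= -sum1_card; congr (_ * _)%N.
  by rewrite [RHS]big_mkcond; apply: eq_bigr => x _; rewrite inE; case: closed_walk.
by rewrite ler_pMn2l.
Qed.

Definition closed_walks_on (E : {set {set T}}) :=
  [set x in closed_walks | cycle_edges x == E].

Lemma card_closed_walks_on_C5 E : symmetric e -> is_C5 e E -> (10 <= #|closed_walks_on E|)%N.
Proof.
move=> esym /existsP [f /and3P [/injectiveP f_inj /forallP f_walk /eqP ->]].
pose g l := [ffun i => f (nth_ord5 l i)].
have g_inj : {in dihedral5 &, injective g}.
  move=> l l' /dihedral5_nth_ord5K {2}<- /dihedral5_nth_ord5K {2}<- /ffunP gll'.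
  by apply: eq_map => i; have := gll' i; rewrite !ffunE => /f_inj ->.
have <- : size (map g dihedral5) = 10%N by rewrite size_map.
rewrite cardE; apply: uniq_leq_size; first by rewrite map_inj_in_uniq ?uniq_dihedral5.
move=> _ /mapP [l /dihedral5_edges [fwd bwd] ->]; rewrite mem_enum !inE.
have edgeE i j : maps_edge l i j ->
    [set f (nth_ord5 l i); f (nth_ord5 l (ordS i))] = [set f j; f (ordS j)].
  by case/orP => /andP [/eqP -> /eqP ->]; rewrite // setUC.
apply/andP; split.
  apply/closed_walkP => i; have [j ij] := fwd i; rewrite /induced !ffunE.
  by case/orP: ij => /andP [/eqP -> /eqP ->]; last rewrite esym.
rewrite eqEsubset; apply/andP; split; apply/subsetP => _ /imsetP [i _ ->].
  by have [j /edgeE ij] := fwd i; apply/imsetP; exists j; rewrite // !ffunE.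
by have [k /edgeE ki] := bwd i; apply/imsetP; exists k; rewrite // !ffunE.
Qed.

Lemma num_C5_le_closed_walks : symmetric e -> (10 * num_C5 e <= #|closed_walks|)%N.
Proof.
move=> esym; rewrite /num_C5; set C5s := [set E | is_C5 e E].
pose on_C5 := [set x : {ffun 'I_5 -> T} | cycle_edges x \in C5s].
have card_on_C5 :
    #|closed_walks :&: on_C5| = (\sum_(E in C5s) #|closed_walks_on E|)%N.
  rewrite -sum1_card (partition_big (fun x : {ffun 'I_5 -> T} => cycle_edges x)
                        (mem C5s)) => [|x]; last by rewrite !inE => /andP [].
  apply: eq_bigr => E /[!inE] E_C5; rewrite -sum1_card; apply: eq_bigl => x.
  by rewrite !inE; case: eqP => [-> | _]; rewrite ?E_C5 ?andbT ?andbF.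
apply: leq_trans (subset_leq_card (subsetIl closed_walks on_C5)).
rewrite card_on_C5 mulnC -sum_nat_const; apply: leq_sum => E.
by rewrite inE; apply: card_closed_walks_on_C5.
Qed.

End Graph.

Unset Implicit Arguments.

Theorem theorem2 (n : nat) (T : finType) (e : rel T) :
  (0 < n)%N -> #|T| = n -> simple_graph e -> triangle_free e ->
  (num_C5 e)%:R <= ((n%:R / 5%:R) ^+ 5 : rat).
Proof.
move=> _ <- e_simple e_tf.
have C5_le := num_C5_le_closed_walks e_simple.1.
have walks_le := card_closed_walks_le e_simple e_tf.
have : (3125 * num_C5 e <= #|T| ^ 5)%N by lia.
rewrite expr_div_n -natrX ler_pdivlMr ?exprn_gt0 // -natrX -natrM ler_nat.
by rewrite mulnC.
Qed.
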